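(* Let $g\in C^{0,1}(\mathbb R)$ be monotonically increasing with Lipschitz constant $g_{\rm Lip}$, and let $\mathcal T_h$ consist of non-obtuse simplices only. Then for all $q\in Q^1_h$ and all $\phi\in S^1_h$, on every simplex $K\in\mathcal T_h$, $$g_{\rm Lip}\,\nabla\pi_h[g(q)]\cdot\nabla q\ge\|\nabla\pi_h[g(q)]\|^2\qquad\text{and}\qquad g_{\rm Lip}\,\nabla\pi_h[g(\phi)]::\nabla\phi\ge\|\nabla\pi_h[g(\phi)]\|^2 .$$
   Context: $D\subset\mathbb R^d$ ($d\in\{2,3\}$) a bounded polytope; $\mathcal T_h$ a conforming partition of $D$ into simplices, non-obtuse meaning all dihedral angles of every simplex are at most $\pi/2$. $Q^1_h$: continuous piecewise linear scalar functions on $\mathcal T_h$; $S^1_h$: continuous piecewise linear symmetric-matrix-valued functions. $\pi_h$: nodal interpolation onto continuous piecewise linears at the vertices of $\mathcal T_h$ (entrywise for matrices). For a symmetric matrix $\phi=O^TDO$ ($O$ orthogonal, $D$ diagonal), $g(\phi):=O^Tg(D)O$ with $g(D)$ diagonal with entries $g(D_{ii})$; this is applied pointwise. For matrix fields, $\nabla\phi::\nabla\psi=\sum_{i,j}\nabla\phi_{ij}\cdot\nabla\psi_{ij}$ and $\|\nabla\phi\|^2=\nabla\phi::\nabla\phi$. *)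

(* the statement is algebraic (affine functions on a simplex),
   stated over an arbitrary real field R (this includes the reals). *)
From HB Require Import structures.
From mathcomp Require Import all_boot all_order all_algebra.
Set Implicit Arguments. Unset Strict Implicit. Unset Printing Implicit Defensive.
Import Order.TTheory GRing.Theory Num.Theory.
Local Open Scope ring_scope.

Definition dotv (R : realFieldType) (d : nat) (u v : 'rV[R]_d) : R :=
  \sum_(i < d) u 0 i * v 0 i.

(* A simplex K in R^d is given by its d+1 vertices x : 'I_d.+1 -> 'rV_d.
   edge_mx x is the d x d matrix whose k-th row is x_{k+1} - x_0. *)
Definition edge_mx (R : realFieldType) (d : nat) (x : 'I_d.+1 -> 'rV[R]_d)
  : 'M[R]_d := \matrix_(k < d) (x (lift ord0 k) - x ord0).

Definition nondegenerate_simplex (R : realFieldType) (d : nat)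
  (x : 'I_d.+1 -> 'rV[R]_d) : Prop := edge_mx x \in unitmx.

Definition outward_normal (R : realFieldType) (d : nat)
  (x : 'I_d.+1 -> 'rV[R]_d) (i : 'I_d.+1) (n : 'rV[R]_d) : Prop :=
  (forall k l, k != i -> l != i -> dotv (x k - x l) n = 0) /\
  (forall k, k != i -> 0 < dotv (x k - x i) n).

(* Non-obtuse simplex: every dihedral angle theta_ij (between the facets
   opposite x_i and x_j, i <> j) is at most pi/2.  Since
   cos theta_ij = - n_i . n_j / (|n_i| |n_j|) for outward normals n_i, n_j,
   theta_ij <= pi/2 is exactly n_i . n_j <= 0. *)
Definition nonobtuse_simplex (R : realFieldType) (d : nat)
  (x : 'I_d.+1 -> 'rV[R]_d) : Prop :=
  forall i j, i != j -> forall ni nj,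
    outward_normal x i ni -> outward_normal x j nj -> dotv ni nj <= 0.

(* Gradient (constant on K) of the P1 function on K with nodal values U:
   the unique w with  w . (x_k - x_0) = U_k - U_0  for all vertices k. *)
Definition p1_grad (R : realFieldType) (d : nat) (x : 'I_d.+1 -> 'rV[R]_d)
  (U : 'I_d.+1 -> R) : 'rV[R]_d :=
  (invmx (edge_mx x) *m \col_(k < d) (U (lift ord0 k) - U ord0))^T.

Definition nondecreasing_fun (R : realFieldType) (g : R -> R) : Prop :=
  forall a b, a <= b -> g a <= g b.

Definition lipschitz_with (R : realFieldType) (g : R -> R) (L : R) : Prop :=
  forall a b, `|g a - g b| <= L * `|a - b|.

Definition sym_mx (R : realFieldType) (m : nat) (A : 'M[R]_m) : Prop := A^T = A.

Definition orth_mx (R : realFieldType) (m : nat) (O : 'M[R]_m) : Prop :=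
  O^T *m O = 1%:M.

(* matfun_rel g A B :  B = g(A)  in the spectral sense of the paper:
   A = O^T D O with O orthogonal, D = diag(delta), and B = O^T g(D) O
   where g(D) = diag(g(delta_1), ..., g(delta_m)). *)
Definition matfun_rel (R : realFieldType) (m : nat) (g : R -> R)
  (A B : 'M[R]_m) : Prop :=
  exists (O : 'M[R]_m) (delta : 'rV[R]_m),
    orth_mx O /\
    A = O^T *m diag_mx delta *m O /\
    B = O^T *m diag_mx (map_mx g delta) *m O.

From HB Require Import structures.
From mathcomp Require Import all_boot all_order all_algebra ring.
Import Order.TTheory GRing.Theory Num.Theory.
Set Implicit Arguments. Unset Strict Implicit. Unset Printing Implicit Defensive.
Local Open Scope ring_scope.

(* Let lambda_0, ..., lambda_d be the barycentric (hat) functions of a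
   simplex K.  The gradient of the P1 function with nodal values U is
   sum_k U_k grad lambda_k, and since sum_k grad lambda_k = 0 the
   "stiffness identity"
     2 grad V . grad U = sum_{k,l} w_kl (V_k - V_l) (U_k - U_l),
     w_kl = - grad lambda_k . grad lambda_l,
   holds.  As - grad lambda_i is an outward normal of the facet opposite
   x_i, non-obtuseness says exactly that w_kl >= 0 for k <> l.  Hence any
   inequality between edge differences that holds for every pair of nodes
   transfers to the gradients (lemma grad_energy_le).

   For a nondecreasing L-Lipschitz g the required edge inequality is
   (g a - g b)^2 <= L (g a - g b)(a - b); for the spectral matrix function
   g(A) it follows from the Frobenius identity
     <g(A) - g(B), A - B> = sum_{p,q} W_pq^2 (g a_p - g b_q)(a_p - b_q),
   with A = O^T diag(a) O, B = P^T diag(b) P and W = O P^T, reducing to the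
   scalar inequality termwise.  The theorem is these two instances; it
   holds in every dimension, and the symmetry of the matrix nodal values is
   already implied by their spectral representation. *)

Section DotProduct.
Variables (R : realFieldType) (d : nat).
Implicit Types u v w : 'rV[R]_d.

Lemma dotvC u v : dotv u v = dotv v u.
Proof. by apply: eq_bigr => i _; rewrite mulrC. Qed.

Lemma dotv_suml n (f : 'I_n -> 'rV[R]_d) v :
  dotv (\sum_(k < n) f k) v = \sum_(k < n) dotv (f k) v.
Proof.
rewrite /dotv exchange_big; apply: eq_bigr => i _.
by rewrite summxE mulr_suml.
Qed.

Lemma dotv_sumr n (f : 'I_n -> 'rV[R]_d) v :
  dotv v (\sum_(k < n) f k) = \sum_(k < n) dotv v (f k).
Proof. by rewrite dotvC dotv_suml; apply: eq_bigr => k _; rewrite dotvC. Qed.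

Lemma dotvZl a u v : dotv (a *: u) v = a * dotv u v.
Proof. by rewrite /dotv mulr_sumr; apply: eq_bigr => i _; rewrite mxE mulrA. Qed.

Lemma dotvZr a u v : dotv v (a *: u) = a * dotv v u.
Proof. by rewrite dotvC dotvZl dotvC. Qed.

Lemma dotvBl u w v : dotv (u - w) v = dotv u v - dotv w v.
Proof. by rewrite /dotv -sumrB; apply: eq_bigr => i _; rewrite !mxE mulrBl. Qed.

Lemma dotvNr u v : dotv u (- v) = - dotv u v.
Proof. by rewrite /dotv -sumrN; apply: eq_bigr => i _; rewrite !mxE mulrN. Qed.

Lemma dotvNl u v : dotv (- u) v = - dotv u v.
Proof. by rewrite dotvC dotvNr dotvC. Qed.

Lemma dotv0r u : dotv u 0 = 0.
Proof. by rewrite /dotv big1 // => i _; rewrite mxE mulr0. Qed.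

End DotProduct.

Lemma zero_rowsum_form (R : comPzRingType) n (a : 'I_n -> 'I_n -> R)
    (V U : 'I_n -> R) :
  (forall k l, a k l = a l k) -> (forall k, \sum_(l < n) a k l = 0) ->
  2 * (\sum_(k < n) \sum_(l < n) a k l * (V k * U l)) =
  \sum_(k < n) \sum_(l < n) - a k l * ((V k - V l) * (U k - U l)).
Proof.
move=> a_sym a_rows.
have expand k l : - a k l * ((V k - V l) * (U k - U l)) =
    (a k l * (V l * U k) - a k l * (V l * U l))
    - (a k l * (V k * U k) - a k l * (V k * U l)) by ring.
under [RHS]eq_bigr => k _ do under eq_bigr => l _ do rewrite expand.
under [RHS]eq_bigr => k _ do rewrite sumrB !sumrB.
rewrite sumrB !sumrB.
have -> : \sum_(k < n) \sum_(l < n) a k l * (V k * U k) = 0.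
  by rewrite big1 // => k _; rewrite -mulr_suml a_rows mul0r.
have -> : \sum_(k < n) \sum_(l < n) a k l * (V l * U l) = 0.
  rewrite exchange_big big1 // => l _.
  by under eq_bigr do rewrite a_sym; rewrite -mulr_suml a_rows mul0r.
have -> : \sum_(k < n) \sum_(l < n) a k l * (V l * U k) =
          \sum_(k < n) \sum_(l < n) a k l * (V k * U l).
  rewrite exchange_big; apply: eq_bigr => k _; apply: eq_bigr => l _.
  by rewrite a_sym.
by rewrite subr0 sub0r opprK mulr_natl mulr2n.
Qed.

Section P1Gradient.
Variables (R : realFieldType) (d : nat) (x : 'I_d.+1 -> 'rV[R]_d).
Hypothesis hK : nondegenerate_simplex x.

Lemma p1_gradE U j : p1_grad x U 0 j =
  \sum_(k < d) invmx (edge_mx x) j k * (U (lift ord0 k) - U ord0).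
Proof. by rewrite /p1_grad !mxE; apply: eq_bigr => k _; rewrite mxE. Qed.

Lemma p1_grad_diff U k l : dotv (x k - x l) (p1_grad x U) = U k - U l.
Proof.
suff from0 j : dotv (x j - x ord0) (p1_grad x U) = U j - U ord0.
  have -> : x k - x l = (x k - x ord0) - (x l - x ord0) by rewrite opprB addrA subrK.
  by rewrite dotvBl !from0 opprB addrA subrK.
case: (unliftP ord0 j) => [j'|] ->; last first.
  by rewrite !subrr /dotv big1 // => i _; rewrite mxE mul0r.
set E := edge_mx x; set c := \col_(k < d) (U (lift ord0 k) - U ord0).
have E_inv : E *m (invmx E *m c) = c by rewrite mulmxA mulmxV // mul1mx.
have := congr1 (fun M : 'cV[R]_d => M j' 0) E_inv; rewrite !mxE => <-.
by apply: eq_bigr => i _; rewrite !mxE.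
Qed.

Definition hat_grad (i : 'I_d.+1) : 'rV[R]_d := p1_grad x (fun k => (k == i)%:R).

Lemma p1_grad_hat U : p1_grad x U = \sum_(i < d.+1) U i *: hat_grad i.
Proof.
have pick (F : 'I_d.+1 -> R) j : \sum_(i < d.+1) F i * (j == i)%:R = F j.
  rewrite (bigD1 j) //= eqxx mulr1 big1 ?addr0 // => i ne.
  by rewrite eq_sym (negbTE ne) mulr0.
apply/rowP => j; rewrite p1_gradE summxE.
under [RHS]eq_bigr => i _ do rewrite mxE /hat_grad p1_gradE mulr_sumr.
rewrite exchange_big; apply: eq_bigr => k _.
under eq_bigr do rewrite mulrCA.
rewrite -mulr_sumr; congr (_ * _).
by under eq_bigr do rewrite mulrBr; rewrite sumrB !pick.
Qed.

(* The hat functions sum to one, so their gradients sum to zero. *)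
Lemma hat_grad_sum : \sum_(i < d.+1) hat_grad i = 0.
Proof.
have const1 : p1_grad x (fun _ => 1) = 0.
  by apply/rowP => j; rewrite p1_gradE big1 ?mxE // => k _; rewrite subrr mulr0.
by rewrite -[RHS]const1 [RHS]p1_grad_hat; apply: eq_bigr => i _; rewrite scale1r.
Qed.

(* - grad lambda_i is orthogonal to the facet opposite x_i and points away
   from x_i, since lambda_i vanishes on that facet and equals 1 at x_i. *)
Lemma hat_grad_outward_normal i : outward_normal x i (- hat_grad i).
Proof.
split=> [k l ki li|k ki]; rewrite dotvNr p1_grad_diff.
  by rewrite (negbTE ki) (negbTE li) subrr oppr0.
by rewrite (negbTE ki) eqxx sub0r opprK ltr01.
Qed.

Definition stiffness_weight (k l : 'I_d.+1) : R := - dotv (hat_grad k) (hat_grad l).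

Lemma stiffness_weight_ge0 k l :
  nonobtuse_simplex x -> k != l -> 0 <= stiffness_weight k l.
Proof.
move=> hno kl.
have := hno k l kl _ _ (hat_grad_outward_normal k) (hat_grad_outward_normal l).
by rewrite dotvNl dotvNr opprK oppr_ge0.
Qed.

Lemma stiffness_identity V U : 2 * dotv (p1_grad x V) (p1_grad x U) =
  \sum_(k < d.+1) \sum_(l < d.+1)
    stiffness_weight k l * ((V k - V l) * (U k - U l)).
Proof.
rewrite -zero_rowsum_form; last 2 first.
- by move=> k l; rewrite dotvC.
- by move=> k; rewrite -dotv_sumr hat_grad_sum dotv0r.
congr (2 * _); rewrite !p1_grad_hat dotv_suml; apply: eq_bigr => k _.
rewrite dotvZl dotv_sumr mulr_sumr; apply: eq_bigr => l _.
by rewrite dotvZr mulrA mulrC.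
Qed.

Lemma grad_energy_le (I : finType) (G P : I -> 'I_d.+1 -> R) (L : R) :
  nonobtuse_simplex x ->
  (forall k l, \sum_c (G c k - G c l) * (G c k - G c l)
               <= L * \sum_c (G c k - G c l) * (P c k - P c l)) ->
  \sum_c dotv (p1_grad x (G c)) (p1_grad x (G c))
    <= L * \sum_c dotv (p1_grad x (G c)) (p1_grad x (P c)).
Proof.
move=> hno edge_le.
have energy V U : 2 * \sum_c dotv (p1_grad x (V c)) (p1_grad x (U c)) =
    \sum_k \sum_l stiffness_weight k l *
      \sum_c (V c k - V c l) * (U c k - U c l).
  rewrite mulr_sumr; under eq_bigr do rewrite stiffness_identity.
  rewrite exchange_big; apply: eq_bigr => k _.
  rewrite exchange_big; apply: eq_bigr => l _.
  by rewrite mulr_sumr.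
rewrite -(ler_pM2l (ltr0Sn R 1)) mulrCA !energy mulr_sumr.
apply: ler_sum => k _; rewrite mulr_sumr; apply: ler_sum => l _.
have [<-|kl] := eqVneq k l.
  by rewrite !big1 ?mulr0 // => c _; rewrite subrr mul0r.
by rewrite mulrCA ler_wpM2l // stiffness_weight_ge0.
Qed.

End P1Gradient.

Lemma monotone_lipschitz_le (R : realFieldType) (g : R -> R) (L a b : R) :
  nondecreasing_fun g -> lipschitz_with g L ->
  (g a - g b) * (g a - g b) <= L * ((g a - g b) * (a - b)).
Proof.
move=> mono lip; set t := g a - g b.
have same_sign : 0 <= t * (a - b).
  have [ab|/ltW ba] := lerP a b.
    by rewrite mulr_le0 // subr_le0 //; apply: mono.
  by rewrite mulr_ge0 // subr_ge0 //; apply: mono.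
have -> : t * t = `|t| * `|t| by rewrite -normrM ger0_norm // -expr2 sqr_ge0.
by rewrite -(ger0_norm same_sign) normrM mulrCA ler_wpM2l ?normr_ge0 ?lip.
Qed.

Section SpectralFunctions.
Variables (R : realFieldType) (m : nat).
Implicit Types A B X Y O P : 'M[R]_m.

Definition frob A B : R := \sum_(i < m) \sum_(j < m) A i j * B i j.

Lemma frob_trace A B : frob A B = \tr (A *m B^T).
Proof.
by apply: eq_bigr => i _; rewrite !mxE; apply: eq_bigr => j _; rewrite mxE.
Qed.

Lemma frobB A B X Y : frob (A - B) (X - Y) =
  \sum_(c : 'I_m * 'I_m) (A c.1 c.2 - B c.1 c.2) * (X c.1 c.2 - Y c.1 c.2).
Proof. by rewrite /frob pair_bigA; apply: eq_bigr => c _; rewrite !mxE. Qed.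

Lemma frob_orth_conj O P X Y : orth_mx O -> orth_mx P ->
  frob (O^T *m X *m P) (O^T *m Y *m P) = frob X Y.
Proof.
move=> /mulmx1C OOt /mulmx1C PPt.
rewrite !frob_trace !trmx_mul !trmxK !mulmxA -[_ *m P *m P^T]mulmxA PPt mulmx1.
by rewrite mxtrace_mulC !mulmxA OOt mul1mx.
Qed.

Lemma spectral_diff O P (a b : 'rV[R]_m) : orth_mx O -> orth_mx P ->
  O^T *m diag_mx a *m O - P^T *m diag_mx b *m P =
  O^T *m (\matrix_(p, q) ((a 0 p - b 0 q) * (O *m P^T) p q)) *m P.
Proof.
move=> hO hP; have PtP : P^T *m P = 1%:M := hP.
have -> : O^T *m diag_mx a *m O = O^T *m (diag_mx a *m (O *m P^T)) *m P.
  by rewrite -!mulmxA PtP mulmx1.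
have -> : P^T *m diag_mx b *m P = O^T *m ((O *m P^T) *m diag_mx b) *m P.
  by rewrite !mulmxA hO mul1mx.
rewrite -mulmxBl -mulmxBr; congr (_ *m _ *m _).
by apply/matrixP => p q; rewrite mul_diag_mx mul_mx_diag !mxE mulrBl [_ * b 0 q]mulrC.
Qed.

Lemma spectral_edge_le (g : R -> R) (L : R) A GA B GB :
  nondecreasing_fun g -> lipschitz_with g L ->
  matfun_rel g A GA -> matfun_rel g B GB ->
  frob (GA - GB) (GA - GB) <= L * frob (GA - GB) (A - B).
Proof.
move=> mono lip [O [a [hO [-> ->]]]] [P [b [hP [-> ->]]]].
rewrite !spectral_diff // !frob_orth_conj // mulr_sumr.
apply: ler_sum => p _; rewrite mulr_sumr; apply: ler_sum => q _.
rewrite !mxE; set w := \sum_(j < m) O p j * P^T j q.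
have weight u v : u * w * (v * w) = w ^+ 2 * (u * v) by ring.
by rewrite !weight [L * _]mulrCA ler_wpM2l ?sqr_ge0 ?monotone_lipschitz_le.
Qed.

End SpectralFunctions.

Theorem lemma5p1 (R : realFieldType) (d : nat) (hd : (d == 2%N) || (d == 3%N))
  (g : R -> R) (L : R) (hmono : nondecreasing_fun g) (hlip : lipschitz_with g L)
  (x : 'I_d.+1 -> 'rV[R]_d) (hK : nondegenerate_simplex x)
  (hno : nonobtuse_simplex x) :
  (forall q : 'I_d.+1 -> R,
     L * dotv (p1_grad x (fun k => g (q k))) (p1_grad x q)
       >= dotv (p1_grad x (fun k => g (q k))) (p1_grad x (fun k => g (q k))))
  /\
  (forall (m : nat) (phi gphi : 'I_d.+1 -> 'M[R]_m),
     (forall k, sym_mx (phi k)) ->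
     (forall k, matfun_rel g (phi k) (gphi k)) ->
     L * (\sum_(i < m) \sum_(j < m)
            dotv (p1_grad x (fun k => gphi k i j)) (p1_grad x (fun k => phi k i j)))
       >= \sum_(i < m) \sum_(j < m)
            dotv (p1_grad x (fun k => gphi k i j)) (p1_grad x (fun k => gphi k i j))).
Proof.
split=> [q | m phi gphi _ spectral].
  have := grad_energy_le (G := fun (_ : 'I_1) k => g (q k)) (P := fun _ k => q k)
            (L := L) hK hno.
  rewrite !big_ord1; apply=> k l; rewrite !big_ord1.
  exact: monotone_lipschitz_le.
rewrite [in X in X <= _]pair_bigA [in X in _ <= X]pair_bigA.
apply: (grad_energy_le (G := fun (c : 'I_m * 'I_m) k => gphi k c.1 c.2)
          (P := fun c k => phi k c.1 c.2) hK hno) => k l.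
by rewrite -!frobB; exact: spectral_edge_le hmono hlip (spectral k) (spectral l).
Qed.
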